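(* Suppose Assumptions 1–4 hold and $p$ is convex. Let $\mathbf{x}^S$ be a social optimum and $\mathbf{x}^P$ a monopoly output, with $X^S=\sum_n x_n^S$, $X^P=\sum_n x_n^P$. (a) If $p(X^P)=p(X^S)$, then $\gamma(\mathbf{x}^P)=1$. (b) If $p(X^P)\ne p(X^S)$, then $p$ is differentiable at $X^P$; letting $c=|p'(X^P)|$, $d=\left|\dfrac{p(X^S)-p(X^P)}{X^S-X^P}\right|$ and $\overline c=c/d$, we have $\overline c\ge1$ and $\gamma(\mathbf{x}^P)\ge\dfrac{3}{3+\overline c}$. (c) The bound is tight at $\overline c=1$: there exists a model satisfying these hypotheses with $\overline c=1$ and a monopoly output whose efficiency is exactly $3/4$.
   Context: Cournot model: $N$ suppliers, inverse demand $p:[0,\infty)\to[0,\infty)$, supplier $n$ has cost $C_n:[0,\infty)\to[0,\infty)$ and chooses $x_n\ge0$; $X=\sum_n x_n$. $C_n'(0)$ is the right derivative at $0$. Assumption 1: each $C_n$ is convex, continuous, nondecreasing on $[0,\infty)$, continuously differentiable on $(0,\infty)$, with $C_n(0)=0$. Assumption 2: $p$ is continuous, nonnegative, nonincreasing, $p(0)>0$; its right derivative at $0$ exists and at every $q>0$ its left and right derivatives exist. Assumption 3: there exists $R>0$ such that $p(R)\le\min_n C_n'(0)$. Assumption 4: $p(0)>\min_n C_n'(0)$. A monopoly output is an optimal solution $\mathbf{x}^P$ of $\max_{\mathbf{x}\ge0}\ p\!\left(\sum_n x_n\right)\sum_n x_n-\sum_n C_n(x_n)$ (maximum total profit of all suppliers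 colluding). Social welfare of $\mathbf{x}\ge0$: $W(\mathbf{x})=\int_0^X p(q)\,dq-\sum_{n=1}^N C_n(x_n)$; a social optimum $\mathbf{x}^S$ maximizes $W$. Efficiency: $\gamma(\mathbf{x})=W(\mathbf{x})/W(\mathbf{x}^S)$. *)

From Stdlib Require Import Reals Lra ClassicalEpsilon.
Open Scope R_scope.

(* Suppliers are indexed by n = 0, ..., N-1; an output vector is x : nat -> R,
   only the components n < N matter. *)
Fixpoint sumN (N : nat) (f : nat -> R) : R :=
  match N with O => 0 | S k => sumN k f + f k end.

Definition right_deriv (f : R -> R) (x l : R) : Prop :=
  forall eps, 0 < eps -> exists delta, 0 < delta /\
    forall h, 0 < h < delta -> Rabs ((f (x + h) - f x) / h - l) < eps.
Definition left_deriv (f : R -> R) (x l : R) : Prop :=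
  forall eps, 0 < eps -> exists delta, 0 < delta /\
    forall h, - delta < h < 0 -> Rabs ((f (x + h) - f x) / h - l) < eps.

Definition convex_nonneg (f : R -> R) : Prop :=
  forall x y t, 0 <= x -> 0 <= y -> 0 <= t <= 1 ->
    f (t * x + (1 - t) * y) <= t * f x + (1 - t) * f y.
Definition nondecr_nonneg (f : R -> R) : Prop :=
  forall x y, 0 <= x -> x <= y -> f x <= f y.
Definition nonincr_nonneg (f : R -> R) : Prop :=
  forall x y, 0 <= x -> x <= y -> f y <= f x.
Definition cont_nonneg (f : R -> R) : Prop :=
  forall x, 0 <= x -> forall eps, 0 < eps -> exists delta, 0 < delta /\
    forall y, 0 <= y -> Rabs (y - x) < delta -> Rabs (f y - f x) < eps.
Definition C1_pos (f : R -> R) : Prop :=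
  exists g : R -> R, (forall x, 0 < x -> derivable_pt_lim f x (g x)) /\
                     (forall x, 0 < x -> continuity_pt g x).

Definition assumption1 (N : nat) (C : nat -> R -> R) : Prop :=
  forall n, (n < N)%nat ->
    (forall x, 0 <= x -> 0 <= C n x) /\
    convex_nonneg (C n) /\ cont_nonneg (C n) /\ nondecr_nonneg (C n) /\
    C1_pos (C n) /\ C n 0 = 0.

Definition cost_slope0 (N : nat) (C : nat -> R -> R) (dC0 : nat -> R) : Prop :=
  forall n, (n < N)%nat -> right_deriv (C n) 0 (dC0 n).

Definition assumption2 (p : R -> R) : Prop :=
  cont_nonneg p /\ (forall q, 0 <= q -> 0 <= p q) /\ nonincr_nonneg p /\
  0 < p 0 /\ (exists l, right_deriv p 0 l) /\
  (forall q, 0 < q -> (exists l, left_deriv p q l) /\ (exists l, right_deriv p q l)).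

Definition assumption3 (N : nat) (p : R -> R) (dC0 : nat -> R) : Prop :=
  exists Rb, 0 < Rb /\ forall n, (n < N)%nat -> p Rb <= dC0 n.

Definition assumption4 (N : nat) (p : R -> R) (dC0 : nat -> R) : Prop :=
  exists n, (n < N)%nat /\ dC0 n < p 0.

Definition model (N : nat) (p : R -> R) (C : nat -> R -> R) (dC0 : nat -> R) : Prop :=
  assumption1 N C /\ cost_slope0 N C dC0 /\ assumption2 p /\
  assumption3 N p dC0 /\ assumption4 N p dC0 /\ convex_nonneg p.

Definition total (N : nat) (x : nat -> R) : R := sumN N x.
Definition feasible (N : nat) (x : nat -> R) : Prop :=
  forall n, (n < N)%nat -> 0 <= x n.

Definition profit (N : nat) (p : R -> R) (C : nat -> R -> R) (x : nat -> R) : R :=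
  p (total N x) * total N x - sumN N (fun n => C n (x n)).
Definition monopoly_output (N : nat) (p : R -> R) (C : nat -> R -> R) (x : nat -> R) : Prop :=
  feasible N x /\ forall y, feasible N y -> profit N p C y <= profit N p C x.

(* Riemann integral of f over [a,b] (0 if f is not Riemann integrable;
   it is always integrable in the situations used here). *)
Definition RInt (f : R -> R) (a b : R) : R :=
  match excluded_middle_informative (exists pr : Riemann_integrable f a b, True) with
  | left H => RiemannInt (proj1_sig (constructive_indefinite_description _ H))
  | right _ => 0
  end.

Definition welfare (N : nat) (p : R -> R) (C : nat -> R -> R) (x : nat -> R) : R :=
  RInt p 0 (total N x) - sumN N (fun n => C n (x n)).
Definition social_optimum (N : nat) (p : R -> R) (C : nat -> R -> R) (x : nat -> R) : Prop :=
  feasible N x /\ forall y, feasible N y -> welfare N p C y <= welfare N p C x.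

Definition efficiency (N : nat) (p : R -> R) (C : nat -> R -> R) (xS x : nat -> R) : R :=
  welfare N p C x / welfare N p C xS.

Definition cbar (p : R -> R) (XS XP c' : R) : R :=
  Rabs c' / Rabs ((p XS - p XP) / (XS - XP)).

From Pilot Require Import Defs.
From Stdlib Require Import Reals Lra Lia ClassicalEpsilon.
From Coquelicot Require Import Coquelicot.
Open Scope R_scope.

(* The proof works with first-order conditions obtained by moving an optimal
   output vector a small step t towards another feasible vector and letting
   t -> 0+.  Convexity of p provides supporting lines ("subgradients") at every
   output level, the one-sided derivatives being such slopes; convexity of the
   costs makes the cost of a convex combination at most the combination of
   costs.  This yields:
   - at the monopoly output X^P: (X - X^P)(p(X^P) + g X^P) <= C(x) - C(x^P) for
     every feasible x and supporting slope g; along the ray through x^P this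
     pins g down, so p has no kink at X^P (monopoly_no_kink);
   - at the social optimum X^S: C(x^S) - C(x) <= (X^S - X) p(X^S).
   Part (a) follows since equal prices make p constant between X^P and X^S.
   For part (b) the tangent line at X^P bounds W(x^P) from below, the chord of
   p between X^P and X^S bounds W(x^S) - W(x^P) from above, and a square
   completion gives 3/(3 + cbar).  Part (c) is p(q) = max(0, 1 - q) with a
   single zero-cost supplier. *)

Lemma sumN_ext N f g : (forall n, (n < N)%nat -> f n = g n) -> sumN N f = sumN N g.
Proof. induction N as [|N IH]; simpl; intros H; [reflexivity|]. rewrite IH, H; auto. Qed.

Lemma sumN_le N f g : (forall n, (n < N)%nat -> f n <= g n) -> sumN N f <= sumN N g.
Proof.
  induction N as [|N IH]; simpl; intros H; [lra|].
  apply Rplus_le_compat; auto.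
Qed.

Lemma sumN_lin N a b f g :
  sumN N (fun n => a * f n + b * g n) = a * sumN N f + b * sumN N g.
Proof. induction N as [|N IH]; simpl; [ring|]. rewrite IH; ring. Qed.

Lemma sumN_zero N : sumN N (fun _ => 0) = 0.
Proof. induction N as [|N IH]; simpl; [reflexivity|]. rewrite IH; ring. Qed.

Lemma sumN_nonneg N f : (forall n, (n < N)%nat -> 0 <= f n) -> 0 <= sumN N f.
Proof. intros H. rewrite <- (sumN_zero N). apply sumN_le. exact H. Qed.

Lemma sumN_point N n (a : nat -> R) : (n < N)%nat ->
  sumN N (fun m => if Nat.eqb m n then a m else 0) = a n.
Proof.
  induction N as [|N IH]; intros H; [lia|]. simpl.
  destruct (Nat.eqb_spec N n) as [->|Hne].
  - rewrite (sumN_ext n _ (fun _ => 0)), sumN_zero; [ring|].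
    intros m Hm. destruct (Nat.eqb_spec m n); [lia|reflexivity].
  - rewrite IH; [ring|lia].
Qed.

Definition lim_right (Q : R -> R) (l : R) : Prop :=
  forall eps, 0 < eps -> exists delta, 0 < delta /\
    forall h, 0 < h < delta -> Rabs (Q h - l) < eps.

Lemma lim_right_ge_affine Q l a b delta : lim_right Q l -> 0 < delta ->
  (forall h, 0 < h < delta -> a + b * h <= Q h) -> a <= l.
Proof.
  intros HQ Hdelta Hbound.
  destruct (Rle_lt_dec a l) as [|Hlt]; [assumption|exfalso].
  set (eps := (a - l) / 2).
  destruct (HQ eps) as [eta [Heta Hclose]]; [unfold eps; lra|].
  set (B := Rabs b + 1).
  assert (HB : 0 < B) by (unfold B; generalize (Rabs_pos b); lra).
  set (m := Rmin (Rmin delta eta) (eps / B)).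
  assert (Hm : 0 < m <= Rmin delta eta /\ m <= eps / B).
  { unfold m. split; [split|]; [|apply Rmin_l|apply Rmin_r].
    apply Rmin_pos; [apply Rmin_pos; auto|].
    apply Rdiv_lt_0_compat; [unfold eps; lra|exact HB]. }
  assert (HmB : m * B <= eps).
  { apply Rle_trans with (eps / B * B); [apply Rmult_le_compat_r; lra|].
    right; field; lra. }
  assert (Hmin : Rmin delta eta <= delta /\ Rmin delta eta <= eta)
    by (split; [apply Rmin_l|apply Rmin_r]).
  set (h := m / 2).
  specialize (Hbound h ltac:(unfold h; lra)).
  specialize (Hclose h ltac:(unfold h; lra)).
  apply Rabs_def2 in Hclose.
  assert (Hb : - Rabs b <= b) by (generalize (Rabs_maj2 b); lra).
  assert (- (Rabs b * h) <= b * h) by (unfold h; nra).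
  unfold B, h, eps in *. nra.
Qed.

Lemma lim_right_scal Q l c : lim_right Q l -> lim_right (fun h => c * Q h) (c * l).
Proof.
  intros HQ eps Heps.
  set (B := Rabs c + 1).
  assert (HB : 0 < B) by (unfold B; generalize (Rabs_pos c); lra).
  destruct (HQ (eps / B)) as [delta [Hdelta Hclose]]; [apply Rdiv_lt_0_compat; lra|].
  exists delta; split; [exact Hdelta|]. intros h Hh.
  rewrite <- Rmult_minus_distr_l, Rabs_mult.
  apply Rle_lt_trans with (B * Rabs (Q h - l)).
  - apply Rmult_le_compat_r; [apply Rabs_pos|unfold B; lra].
  - specialize (Hclose h Hh).
    apply Rmult_lt_compat_l with (r := B) in Hclose; [|exact HB].
    replace (B * (eps / B)) with eps in Hclose by (field; lra). exact Hclose.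
Qed.

Lemma lim_right_le_affine Q l a b delta : lim_right Q l -> 0 < delta ->
  (forall h, 0 < h < delta -> Q h <= a + b * h) -> l <= a.
Proof.
  intros HQ Hdelta Hbound.
  assert (H := lim_right_ge_affine (fun h => -1 * Q h) (-1 * l) (- a) (- b) delta
                 (lim_right_scal Q l (-1) HQ) Hdelta).
  enough (- a <= -1 * l) by lra.
  apply H. intros h Hh. specialize (Hbound h Hh). lra.
Qed.

Lemma lim_right_const A : lim_right (fun _ => A) A.
Proof.
  intros eps Heps. exists 1; split; [lra|]. intros h _.
  rewrite Rminus_diag, Rabs_R0. exact Heps.
Qed.

Definition slope (f : R -> R) (a b : R) : R := (f b - f a) / (b - a).

Lemma slope_mul f a b : a <> b -> slope f a b * (b - a) = f b - f a.
Proof. intros H. unfold slope. field. lra. Qed.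

Lemma right_deriv_lim f x l : right_deriv f x l -> lim_right (fun h => slope f x (x + h)) l.
Proof.
  intros H eps Heps. destruct (H eps Heps) as [delta [Hdelta Hclose]].
  exists delta; split; [exact Hdelta|]. intros h Hh.
  unfold slope. replace (x + h - x) with h by ring. auto.
Qed.

Lemma left_deriv_lim f x l : left_deriv f x l -> lim_right (fun h => slope f (x - h) x) l.
Proof.
  intros H eps Heps. destruct (H eps Heps) as [delta [Hdelta Hclose]].
  exists delta; split; [exact Hdelta|]. intros h Hh.
  replace (slope f (x - h) x) with ((f (x + - h) - f x) / - h).
  - apply Hclose. lra.
  - unfold slope. replace (x + - h) with (x - h) by ring. field. lra.
Qed.

Lemma derivable_one_sided f x l :
  derivable_pt_lim f x l -> right_deriv f x l /\ left_deriv f x l.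
Proof.
  intros H. split; intros eps Heps; destruct (H eps Heps) as [delta Hclose];
    exists delta; split; try apply cond_pos; intros h Hh; apply Hclose; try lra.
  - rewrite Rabs_right; lra.
  - rewrite Rabs_left; lra.
Qed.

Lemma one_sided_derivable f x l :
  left_deriv f x l -> right_deriv f x l -> derivable_pt_lim f x l.
Proof.
  intros Hl Hr eps Heps.
  destruct (Hl eps Heps) as [d1 [Hd1 H1]]. destruct (Hr eps Heps) as [d2 [Hd2 H2]].
  exists (mkposreal (Rmin d1 d2) (Rmin_pos _ _ Hd1 Hd2)). intros h Hh0 Hh. simpl in Hh.
  apply Rabs_def2 in Hh.
  assert (Rmin d1 d2 <= d1) by apply Rmin_l. assert (Rmin d1 d2 <= d2) by apply Rmin_r.
  destruct (Rlt_or_le h 0); [apply H1|apply H2]; lra.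
Qed.

Lemma chord_above f a b x : convex_nonneg f -> 0 <= a -> a < b -> a <= x <= b ->
  f x <= f a + slope f a b * (x - a).
Proof.
  intros Hconv Ha Hab Hx.
  set (t := (x - a) / (b - a)).
  assert (Ht : 0 <= t <= 1).
  { unfold t; split.
    - apply Rdiv_le_0_compat; lra.
    - apply Rmult_le_reg_r with (b - a); [lra|].
      unfold Rdiv; rewrite Rmult_assoc, Rinv_l; lra. }
  replace x with (t * b + (1 - t) * a) at 1 by (unfold t; field; lra).
  replace (f a + slope f a b * (x - a)) with (t * f b + (1 - t) * f a)
    by (unfold t, slope; field; lra).
  apply Hconv; lra.
Qed.

Lemma three_slopes f a b c : convex_nonneg f -> 0 <= a -> a < b -> b < c ->
  slope f a b <= slope f a c <= slope f b c.
Proof.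
  intros Hconv Ha Hab Hbc.
  assert (Hchord := chord_above f a c b Hconv Ha ltac:(lra) ltac:(lra)).
  assert (Eab := slope_mul f a b ltac:(lra)).
  assert (Eac := slope_mul f a c ltac:(lra)).
  assert (Ebc := slope_mul f b c ltac:(lra)).
  split; nra.
Qed.

Definition supporting (f : R -> R) (q g : R) : Prop :=
  forall y, 0 <= y -> f q + g * (y - q) <= f y.

Lemma supporting_of_slopes f q g : 0 <= q ->
  (forall y, 0 <= y < q -> slope f y q <= g) ->
  (forall y, q < y -> g <= slope f q y) -> supporting f q g.
Proof.
  intros Hq Hleft Hright y Hy.
  destruct (Rtotal_order y q) as [Hlt|[->|Hgt]].
  - specialize (Hleft y ltac:(lra)). assert (E := slope_mul f y q ltac:(lra)). nra.
  - lra.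
  - specialize (Hright y Hgt). assert (E := slope_mul f q y ltac:(lra)). nra.
Qed.

Lemma supporting_right_deriv f q r : convex_nonneg f -> 0 <= q -> right_deriv f q r ->
  supporting f q r.
Proof.
  intros Hconv Hq Hr. apply right_deriv_lim in Hr.
  apply supporting_of_slopes; [exact Hq| |].
  - intros y Hy. apply (lim_right_ge_affine _ _ _ 0 1 Hr); [lra|].
    intros h Hh. rewrite Rmult_0_l, Rplus_0_r.
    destruct (three_slopes f y q (q + h) Hconv ltac:(lra) ltac:(lra) ltac:(lra)); lra.
  - intros y Hy. apply (lim_right_le_affine _ _ _ 0 (y - q) Hr); [lra|].
    intros h Hh. rewrite Rmult_0_l, Rplus_0_r.
    apply (three_slopes f q (q + h) y Hconv); lra.
Qed.

Lemma supporting_left_deriv f q l : convex_nonneg f -> 0 < q -> left_deriv f q l ->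
  supporting f q l.
Proof.
  intros Hconv Hq Hl. apply left_deriv_lim in Hl.
  apply supporting_of_slopes; [lra| |].
  - intros y Hy. apply (lim_right_ge_affine _ _ _ 0 (q - y) Hl); [lra|].
    intros h Hh. rewrite Rmult_0_l, Rplus_0_r.
    apply (three_slopes f y (q - h) q Hconv); lra.
  - intros y Hy. apply (lim_right_le_affine _ _ _ 0 q Hl); [lra|].
    intros h Hh. rewrite Rmult_0_l, Rplus_0_r.
    destruct (three_slopes f (q - h) q y Hconv ltac:(lra) ltac:(lra) ltac:(lra)); lra.
Qed.

Lemma right_deriv_nonpos f q r : nonincr_nonneg f -> 0 <= q -> right_deriv f q r -> r <= 0.
Proof.
  intros Hmono Hq Hr. apply right_deriv_lim in Hr.
  apply (lim_right_le_affine _ _ _ 0 1 Hr); [lra|].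
  intros h Hh. rewrite Rmult_0_l, Rplus_0_r.
  assert (f (q + h) <= f q) by (apply Hmono; lra).
  assert (E := slope_mul f q (q + h) ltac:(lra)). nra.
Qed.

(* Integrals of a function continuous on [0, +oo) over nonnegative bounds.
   Extending p by p(max 0 x) makes it continuous everywhere. *)
Lemma ex_RInt_nonneg p a b : cont_nonneg p -> 0 <= a -> 0 <= b -> ex_RInt p a b.
Proof.
  intros Hcont Ha Hb.
  apply ex_RInt_ext with (fun x => p (Rmax 0 x)).
  - intros x Hx. rewrite Rmax_right; [reflexivity|].
    apply Rle_trans with (Rmin a b); [|lra]. apply Rmin_glb; assumption.
  - apply (ex_RInt_continuous (V := R_CompleteNormedModule)). intros x _.
    apply continuity_pt_filterlim. intros eps Heps.
    destruct (Hcont (Rmax 0 x) (Rmax_l 0 x) eps Heps) as [delta [Hdelta Hclose]].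
    exists delta; split; [exact Hdelta|]. intros y [_ Hyx].
    unfold R_dist in *; simpl in *; unfold R_dist in *.
    apply Hclose; [apply Rmax_l|].
    apply Rle_lt_trans with (Rabs (y - x)); [|exact Hyx].
    unfold Rmax; destruct (Rle_dec 0 y), (Rle_dec 0 x);
      apply Rabs_le; apply Rabs_def2 in Hyx; unfold Rabs; destruct Rcase_abs; lra.
Qed.

Lemma Defs_RInt_eq p a b : cont_nonneg p -> 0 <= a -> 0 <= b ->
  Defs.RInt p a b = RInt p a b.
Proof.
  intros Hcont Ha Hb. assert (Hex := ex_RInt_nonneg p a b Hcont Ha Hb).
  unfold Defs.RInt. destruct excluded_middle_informative as [Hyes|Hno].
  - symmetry; apply RInt_Reals.
  - exfalso; apply Hno. exists (ex_RInt_Reals_0 _ _ _ Hex); trivial.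
Qed.

Lemma RInt_split p a b : cont_nonneg p -> 0 <= a -> 0 <= b ->
  RInt p 0 b - RInt p 0 a = RInt p a b.
Proof.
  intros Hcont Ha Hb.
  rewrite <- (RInt_Chasles p 0 a b); try apply ex_RInt_nonneg; try lra; auto.
  unfold plus; simpl. ring.
Qed.

Lemma RInt_swap_nonneg p a b : cont_nonneg p -> 0 <= a -> 0 <= b ->
  RInt p a b = - RInt p b a.
Proof.
  intros Hcont Ha Hb. rewrite <- (opp_RInt_swap p b a); [reflexivity|].
  apply ex_RInt_nonneg; assumption.
Qed.

Definition affine (al be x0 x : R) : R := al + be * (x - x0).

Lemma continuous_affine al be x0 x : continuous (affine al be x0) x.
Proof.
  apply continuity_pt_filterlim. unfold affine.
  apply continuity_pt_plus; [apply continuity_pt_const; intros u v; reflexivity|].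
  apply continuity_pt_mult; [apply continuity_pt_const; intros u v; reflexivity|].
  apply continuity_pt_minus; [apply continuity_pt_id|].
  apply continuity_pt_const; intros u v; reflexivity.
Qed.

Lemma RInt_affine al be x0 a b :
  RInt (affine al be x0) a b = al * (b - a) + be * ((b - x0) ^ 2 - (a - x0) ^ 2) / 2.
Proof.
  set (F x := al * x + be * (x - x0) ^ 2 / 2).
  apply is_RInt_unique.
  replace (al * (b - a) + be * ((b - x0) ^ 2 - (a - x0) ^ 2) / 2) with (minus (F b) (F a))
    by (unfold minus, plus, opp, F; simpl; field).
  apply (is_RInt_derive (V := R_CompleteNormedModule) F).
  - intros x _. unfold F, affine. auto_derive; [exact I|field].
  - intros x _. apply continuous_affine.
Qed.

Lemma RInt_ge_affine p a b al be x0 : cont_nonneg p -> 0 <= a <= b ->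
  (forall x, a < x < b -> affine al be x0 x <= p x) ->
  al * (b - a) + be * ((b - x0) ^ 2 - (a - x0) ^ 2) / 2 <= RInt p a b.
Proof.
  intros Hcont Hab Hbound. rewrite <- RInt_affine.
  apply RInt_le; [lra| |apply ex_RInt_nonneg; [exact Hcont|lra|lra]|exact Hbound].
  apply (ex_RInt_continuous (V := R_CompleteNormedModule)). intros; apply continuous_affine.
Qed.

Lemma RInt_le_affine p a b al be x0 : cont_nonneg p -> 0 <= a <= b ->
  (forall x, a < x < b -> p x <= affine al be x0 x) ->
  RInt p a b <= al * (b - a) + be * ((b - x0) ^ 2 - (a - x0) ^ 2) / 2.
Proof.
  intros Hcont Hab Hbound. rewrite <- RInt_affine.
  apply RInt_le; [lra|apply ex_RInt_nonneg; [exact Hcont|lra|lra]| |exact Hbound].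
  apply (ex_RInt_continuous (V := R_CompleteNormedModule)). intros; apply continuous_affine.
Qed.

Lemma affine_flat c x0 x : affine c 0 x0 x = c.
Proof. unfold affine. ring. Qed.

Lemma RInt_le_left_value p a b : cont_nonneg p -> nonincr_nonneg p -> 0 <= a -> 0 <= b ->
  RInt p a b <= (b - a) * p a.
Proof.
  intros Hcont Hmono Ha Hb. destruct (Rle_lt_dec a b).
  - assert (H := RInt_le_affine p a b (p a) 0 0 Hcont ltac:(lra)).
    enough (Hflat : forall x, a < x < b -> p x <= affine (p a) 0 0 x) by (specialize (H Hflat); lra).
    intros x Hx. rewrite affine_flat. apply Hmono; lra.
  - rewrite RInt_swap_nonneg by assumption.
    assert (H := RInt_ge_affine p b a (p a) 0 0 Hcont ltac:(lra)).
    enough (Hflat : forall x, b < x < a -> affine (p a) 0 0 x <= p x) by (specialize (H Hflat); lra).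
    intros x Hx. rewrite affine_flat. apply Hmono; lra.
Qed.

Lemma RInt_ge_right_value p a b : cont_nonneg p -> nonincr_nonneg p -> 0 <= a -> 0 <= b ->
  (b - a) * p b <= RInt p a b.
Proof.
  intros Hcont Hmono Ha Hb. destruct (Rle_lt_dec a b).
  - assert (H := RInt_ge_affine p a b (p b) 0 0 Hcont ltac:(lra)).
    enough (Hflat : forall x, a < x < b -> affine (p b) 0 0 x <= p x) by (specialize (H Hflat); lra).
    intros x Hx. rewrite affine_flat. apply Hmono; lra.
  - rewrite RInt_swap_nonneg by assumption.
    assert (H := RInt_le_affine p b a (p b) 0 0 Hcont ltac:(lra)).
    enough (Hflat : forall x, b < x < a -> p x <= affine (p b) 0 0 x) by (specialize (H Hflat); lra).
    intros x Hx. rewrite affine_flat. apply Hmono; lra.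
Qed.

Definition cost (N : nat) (C : nat -> R -> R) (x : nat -> R) : R :=
  sumN N (fun n => C n (x n)).
Definition comb (t : R) (x y : nat -> R) : nat -> R := fun n => t * x n + (1 - t) * y n.
Definition scale (t : R) (x : nat -> R) : nat -> R := fun n => t * x n.
Definition zero_output : nat -> R := fun _ => 0.

Lemma profit_eq N p C x : profit N p C x = p (total N x) * total N x - cost N C x.
Proof. reflexivity. Qed.

Lemma feasible_comb N t x y : feasible N x -> feasible N y -> 0 <= t <= 1 ->
  feasible N (comb t x y).
Proof. intros Hx Hy Ht n Hn. unfold comb. specialize (Hx n Hn); specialize (Hy n Hn). nra. Qed.

Lemma feasible_scale N t x : feasible N x -> 0 <= t -> feasible N (scale t x).
Proof. intros Hx Ht n Hn. unfold scale. specialize (Hx n Hn). nra. Qed.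

Lemma total_comb N t x y : total N (comb t x y) = t * total N x + (1 - t) * total N y.
Proof. apply sumN_lin. Qed.

Lemma total_scale N t x : total N (scale t x) = t * total N x.
Proof.
  unfold total, scale. rewrite (sumN_ext N _ (fun n => t * x n + 0 * x n)).
  - rewrite sumN_lin. ring.
  - intros n _. ring.
Qed.

Lemma total_nonneg N x : feasible N x -> 0 <= total N x.
Proof. intros H. apply sumN_nonneg. exact H. Qed.

Lemma total_zero N : total N zero_output = 0.
Proof. apply sumN_zero. Qed.

Lemma cost_scale_one N C x : cost N C (scale 1 x) = cost N C x.
Proof. apply sumN_ext. intros n _. unfold scale. rewrite Rmult_1_l. reflexivity. Qed.

Lemma scaled_component_derivable f a : C1_pos f -> 0 <= a ->
  exists k, derivable_pt_lim (fun t => f (t * a)) 1 k.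
Proof.
  intros [g [Hg _]] [Ha|<-].
  - exists (g a * (1 * a)).
    apply (derivable_pt_lim_comp (fun t => id t * a) f 1 (1 * a) (g a)).
    + apply derivable_pt_lim_scal_right, derivable_pt_lim_id.
    + unfold id. rewrite Rmult_1_l. apply Hg, Ha.
  - exists 0. intros eps Heps. exists (mkposreal 1 Rlt_0_1). intros h _ _.
    rewrite !Rmult_0_r, Rminus_diag. unfold Rdiv. rewrite Rmult_0_l, Rminus_0_r, Rabs_R0.
    exact Heps.
Qed.

Section Costs.
Variables (N : nat) (C : nat -> R -> R).
Hypothesis HC : assumption1 N C.

Lemma cost_nonneg x : feasible N x -> 0 <= cost N C x.
Proof. intros Hx. apply sumN_nonneg. intros n Hn. apply (HC n Hn), Hx, Hn. Qed.

Lemma cost_zero : cost N C zero_output = 0.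
Proof.
  unfold cost, zero_output. transitivity (sumN N (fun _ => 0)); [|apply sumN_zero].
  apply sumN_ext. intros n Hn. apply (HC n Hn).
Qed.

Lemma cost_comb x y t : feasible N x -> feasible N y -> 0 <= t <= 1 ->
  cost N C (comb t x y) <= t * cost N C x + (1 - t) * cost N C y.
Proof.
  intros Hx Hy Ht. unfold cost. rewrite <- sumN_lin. apply sumN_le.
  intros n Hn. destruct (HC n Hn) as [_ [Hconv _]]. apply Hconv; auto.
Qed.

Lemma ray_cost_derivable x : feasible N x ->
  exists K, derivable_pt_lim (fun t => cost N C (scale t x)) 1 K.
Proof.
  revert HC. induction N as [|M IH]; intros HCM Hx.
  - exists 0. apply derivable_pt_lim_const.
  - destruct IH as [K1 HK1].
    + intros n Hn. apply HCM. lia.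
    + intros n Hn. apply Hx. lia.
    + destruct (scaled_component_derivable (C M) (x M)) as [K2 HK2].
      * apply (HCM M (Nat.lt_succ_diag_r M)).
      * apply Hx, Nat.lt_succ_diag_r.
      * exists (K1 + K2). exact (derivable_pt_lim_plus _ _ _ _ _ HK1 HK2).
Qed.

End Costs.

Section Monopoly.
Variables (N : nat) (p : R -> R) (C : nat -> R -> R) (xP : nat -> R).
Hypothesis HC : assumption1 N C.
Hypothesis Hmono : monopoly_output N p C xP.

Let P := total N xP.

Lemma monopoly_foc g y : feasible N y -> supporting p P g ->
  (total N y - P) * (p P + g * P) <= cost N C y - cost N C xP.
Proof.
  intros Hy Hsupp. destruct Hmono as [HxP Hopt].
  assert (HP : 0 <= P) by apply total_nonneg, HxP.
  assert (HY : 0 <= total N y) by apply total_nonneg, Hy.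
  set (D := total N y - P).
  apply (lim_right_ge_affine _ _ _ (g * D ^ 2) 1 (lim_right_const _)); [lra|].
  intros t Ht. cbv beta.
  assert (Hprofit := Hopt _ (feasible_comb N t y xP Hy HxP ltac:(lra))).
  rewrite !profit_eq, total_comb in Hprofit. fold P in Hprofit.
  replace (t * total N y + (1 - t) * P) with (P + t * D) in Hprofit by (unfold D; ring).
  assert (Hcost := cost_comb N C HC y xP t Hy HxP ltac:(lra)).
  assert (Hline : (p P + g * (t * D)) * (P + t * D) <= p (P + t * D) * (P + t * D)).
  { apply Rmult_le_compat_r; [unfold D; nra|].
    replace (t * D) with (P + t * D - P) at 1 by ring. apply Hsupp. unfold D; nra. }
  assert (t * (D * (p P + g * P) + g * D ^ 2 * t) <= t * (cost N C y - cost N C xP)) by nra.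
  apply Rmult_le_reg_l with t; lra.
Qed.

(* Comparing with producing nothing: the monopoly cost is at most P (p(P) + g P). *)
Lemma monopoly_cost_bound g : supporting p P g -> cost N C xP <= P * p P + g * P ^ 2.
Proof.
  intros Hsupp.
  assert (H := monopoly_foc g zero_output (fun n _ => Rle_refl 0) Hsupp).
  rewrite (cost_zero N C HC), total_zero in H. nra.
Qed.

Lemma monopoly_marginal g K : supporting p P g ->
  derivable_pt_lim (fun t => cost N C (scale t xP)) 1 K -> P * (p P + g * P) = K.
Proof.
  intros Hsupp HK. destruct Hmono as [HxP _].
  set (h := fun t => cost N C (scale t xP)) in HK.
  assert (Hh1 : h 1 = cost N C xP) by apply cost_scale_one.
  destruct (derivable_one_sided _ _ _ HK) as [Hr Hl].
  apply right_deriv_lim in Hr. apply left_deriv_lim in Hl.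
  apply Rle_antisym.
  - apply (lim_right_ge_affine _ _ _ 0 1 Hr); [lra|]. intros k Hk.
    assert (Hfoc := monopoly_foc g (scale (1 + k) xP)
                      (feasible_scale N (1 + k) xP HxP ltac:(lra)) Hsupp).
    rewrite total_scale in Hfoc. fold P in Hfoc.
    assert (E := slope_mul h 1 (1 + k) ltac:(lra)).
    rewrite Hh1 in E. unfold h at 2 in E. nra.
  - apply (lim_right_le_affine _ _ _ 0 1 Hl); [lra|]. intros k Hk.
    assert (Hfoc := monopoly_foc g (scale (1 - k) xP)
                      (feasible_scale N (1 - k) xP HxP ltac:(lra)) Hsupp).
    rewrite total_scale in Hfoc. fold P in Hfoc.
    assert (E := slope_mul h (1 - k) 1 ltac:(lra)).
    rewrite Hh1 in E. unfold h at 2 in E. nra.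
Qed.

Lemma monopoly_no_kink l r : convex_nonneg p -> 0 < P ->
  left_deriv p P l -> right_deriv p P r -> l = r.
Proof.
  intros Hconv HP Hl Hr.
  destruct (ray_cost_derivable N C HC xP (proj1 Hmono)) as [K HK].
  assert (El := monopoly_marginal l K (supporting_left_deriv p P l Hconv HP Hl) HK).
  assert (Er := monopoly_marginal r K (supporting_right_deriv p P r Hconv ltac:(lra) Hr) HK).
  assert (HP2 : 0 < P * P) by nra. nra.
Qed.

End Monopoly.

Lemma welfare_eq N p C x : cont_nonneg p -> feasible N x ->
  welfare N p C x = RInt p 0 (total N x) - cost N C x.
Proof.
  intros Hcont Hx. unfold welfare. rewrite Defs_RInt_eq; [reflexivity|exact Hcont|lra|].
  apply total_nonneg, Hx.
Qed.

Lemma cont_segment p S Y : cont_nonneg p -> 0 <= S -> 0 <= Y ->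
  lim_right (fun t => p (t * Y + (1 - t) * S)) (p S).
Proof.
  intros Hcont HS HY eps Heps.
  destruct (Hcont S HS eps Heps) as [d [Hd Hclose]].
  set (B := Rabs (Y - S) + 1).
  assert (HB : 0 < B) by (unfold B; generalize (Rabs_pos (Y - S)); lra).
  exists (Rmin 1 (d / B)). split; [apply Rmin_pos; [lra|apply Rdiv_lt_0_compat; lra]|].
  intros t [Ht0 Ht].
  assert (Ht1 : t <= 1) by (generalize (Rmin_l 1 (d / B)); lra).
  apply Hclose; [nra|].
  assert (HtB : t * B < d).
  { apply Rlt_le_trans with (d / B * B); [apply Rmult_lt_compat_r; [lra|]|right; field; lra].
    generalize (Rmin_r 1 (d / B)); lra. }
  replace (t * Y + (1 - t) * S - S) with (t * (Y - S)) by ring.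
  rewrite Rabs_mult, (Rabs_right t) by lra.
  unfold B in HtB. lra.
Qed.

Section Social.
Variables (N : nat) (p : R -> R) (C : nat -> R -> R) (xS : nat -> R).
Hypothesis HC : assumption1 N C.
Hypothesis Hcont : cont_nonneg p.
Hypothesis Hdecr : nonincr_nonneg p.
Hypothesis Hsocial : social_optimum N p C xS.

Let S := total N xS.

Lemma social_foc y : feasible N y ->
  cost N C xS - cost N C y <= (S - total N y) * p S.
Proof.
  intros Hy. destruct Hsocial as [HxS Hopt].
  assert (HS : 0 <= S) by apply total_nonneg, HxS.
  assert (HY : 0 <= total N y) by apply total_nonneg, Hy.
  set (Y := total N y) in *.
  assert (Hlim := lim_right_scal _ _ (S - Y) (cont_segment p S Y Hcont HS HY)).
  apply (lim_right_ge_affine _ _ _ 0 1 Hlim); [lra|]. intros t Ht.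
  cbv beta. rewrite Rmult_0_l, Rplus_0_r.
  assert (Hfeas := feasible_comb N t y xS Hy HxS ltac:(lra)).
  assert (Hwelfare := Hopt _ Hfeas).
  rewrite !welfare_eq, total_comb in Hwelfare by assumption. fold S Y in Hwelfare.
  set (Z := t * Y + (1 - t) * S) in *.
  assert (HZ : 0 <= Z) by (unfold Z; nra).
  assert (Hsplit := RInt_split p Z S Hcont HZ HS).
  assert (Hint := RInt_le_left_value p Z S Hcont Hdecr HZ HS).
  assert (Hcost := cost_comb N C HC y xS t Hy HxS ltac:(lra)).
  replace (S - Z) with (t * (S - Y)) in Hint by (unfold Z; ring).
  assert (t * (cost N C xS - cost N C y) <= t * ((S - Y) * p Z)) by lra.
  apply Rmult_le_reg_l with t; lra.
Qed.

End Social.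

Definition single (n : nat) (e : R) : nat -> R := fun m => if Nat.eqb m n then e else 0.

Lemma single_feasible N n e : 0 <= e -> feasible N (single n e).
Proof. intros He m _. unfold single. destruct Nat.eqb; lra. Qed.

Lemma single_total N n e : (n < N)%nat -> total N (single n e) = e.
Proof. intros H. apply (sumN_point N n (fun _ => e) H). Qed.

Lemma single_cost N C n e : assumption1 N C -> (n < N)%nat -> cost N C (single n e) = C n e.
Proof.
  intros HC H. unfold cost, single.
  rewrite <- (sumN_point N n (fun m => C m e) H). apply sumN_ext.
  intros m Hm. destruct (Nat.eqb m n); [reflexivity|apply (HC m Hm)].
Qed.

Lemma small_profitable_output p f c0 : cont_nonneg p -> right_deriv f 0 c0 -> f 0 = 0 ->
  c0 < p 0 -> exists e, 0 < e /\ f e < p e * e.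
Proof.
  intros Hcont Hderiv Hf0 Hlt.
  set (g := p 0 - c0).
  destruct (Hderiv (g / 2)) as [d1 [Hd1 H1]]; [unfold g; lra|].
  destruct (Hcont 0 (Rle_refl 0) (g / 2)) as [d2 [Hd2 H2]]; [unfold g; lra|].
  set (e := Rmin d1 d2 / 2).
  assert (He : 0 < e < d1 /\ e < d2).
  { assert (0 < Rmin d1 d2) by (apply Rmin_pos; lra).
    generalize (Rmin_l d1 d2) (Rmin_r d1 d2). unfold e. lra. }
  exists e; split; [lra|].
  specialize (H1 e (proj1 He)).
  specialize (H2 e ltac:(lra) ltac:(rewrite Rminus_0_r, Rabs_right; lra)).
  rewrite Rplus_0_l, Hf0, Rminus_0_r in H1.
  apply Rabs_def2 in H1. apply Rabs_def2 in H2.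
  assert (E : f e = f e / e * e) by (field; lra).
  unfold g in *. nra.
Qed.

(* By Assumption 4 some small positive output is profitable; hence the social
   welfare is positive and the monopoly output is nonzero. *)
Lemma model_profitable_output N p C dC0 : model N p C dC0 ->
  exists y, feasible N y /\ 0 < total N y /\ cost N C y < p (total N y) * total N y.
Proof.
  intros [HC [Hslope [[Hcont _] [_ [[n [Hn Hlt]] _]]]]].
  destruct (small_profitable_output p (C n) (dC0 n) Hcont (Hslope n Hn)
              ltac:(apply (HC n Hn)) Hlt) as [e [He Hprofit]].
  exists (single n e). rewrite single_total, single_cost by assumption.
  split; [apply single_feasible; lra|]. split; assumption.
Qed.

Lemma social_welfare_pos N p C dC0 xS : model N p C dC0 -> social_optimum N p C xS ->
  0 < welfare N p C xS.
Proof.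
  intros Hmodel [HxS Hopt].
  destruct (model_profitable_output N p C dC0 Hmodel) as [y [Hy [HY Hprofit]]].
  destruct Hmodel as [_ [_ [[Hcont [_ [Hdecr _]]] _]]].
  assert (Hint := RInt_ge_right_value p 0 (total N y) Hcont Hdecr ltac:(lra) ltac:(lra)).
  assert (H := Hopt y Hy). rewrite (welfare_eq N p C y) in H by assumption. lra.
Qed.

Lemma monopoly_total_pos N p C dC0 xP : model N p C dC0 -> monopoly_output N p C xP ->
  0 < total N xP.
Proof.
  intros Hmodel [HxP Hopt].
  destruct (model_profitable_output N p C dC0 Hmodel) as [y [Hy [HY Hprofit]]].
  assert (H := Hopt y Hy). rewrite !profit_eq in H.
  assert (Hcost := cost_nonneg N C (proj1 Hmodel) xP HxP).
  destruct (total_nonneg N xP HxP) as [HP|HP]; [exact HP|].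
  rewrite <- HP in H. lra.
Qed.

Lemma efficiency_algebra P D c d WP WS : 0 < d <= c -> 0 < WS ->
  3 / 2 * c * P ^ 2 <= WP -> WS - WP <= c * P * D - d * D ^ 2 / 2 ->
  3 / (3 + c / d) <= WP / WS.
Proof.
  intros Hd HWS HWP Hgap.
  assert (Hcd : 0 < c / d) by (apply Rdiv_lt_0_compat; lra).
  assert (Hsquare : 0 <= (c * P - d * D) ^ 2) by apply pow2_ge_0.
  assert (Hkey : 3 * d * WS <= (3 * d + c) * WP).
  { assert (c * (3 / 2 * c * P ^ 2) <= c * WP) by (apply Rmult_le_compat_l; lra).
    assert (d * (WS - WP) <= d * (c * P * D - d * D ^ 2 / 2)) by (apply Rmult_le_compat_l; lra).
    nra. }
  apply Rmult_le_reg_r with ((3 + c / d) * WS); [nra|].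
  replace (3 / (3 + c / d) * ((3 + c / d) * WS)) with (3 * WS) by (field; lra).
  replace (WP / WS * ((3 + c / d) * WS)) with ((3 * d + c) * WP / d) by (field; lra).
  apply Rmult_le_reg_r with d; [lra|].
  replace ((3 * d + c) * WP / d * d) with ((3 * d + c) * WP) by (field; lra). lra.
Qed.

Section Efficiency.
Variables (N : nat) (p : R -> R) (C : nat -> R -> R) (xS xP : nat -> R).
Hypothesis HC : assumption1 N C.
Hypothesis Hcont : cont_nonneg p.
Hypothesis Hdecr : nonincr_nonneg p.
Hypothesis Hconv : convex_nonneg p.
Hypothesis Hsocial : social_optimum N p C xS.
Hypothesis Hmono : monopoly_output N p C xP.

Let P := total N xP.
Let S := total N xS.
Let HP0 : 0 <= P := total_nonneg N xP (proj1 Hmono).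
Let HS0 : 0 <= S := total_nonneg N xS (proj1 Hsocial).

Lemma welfare_gap :
  welfare N p C xS - welfare N p C xP = RInt p P S - (cost N C xS - cost N C xP).
Proof.
  rewrite !welfare_eq by (apply Hcont || apply Hsocial || apply Hmono).
  fold P S. rewrite <- (RInt_split p P S Hcont HP0 HS0). ring.
Qed.

Lemma efficiency_equal_prices : 0 < welfare N p C xS -> p P = p S ->
  efficiency N p C xS xP = 1.
Proof.
  intros HWS Hprice.
  assert (Hlow := RInt_ge_right_value p P S Hcont Hdecr HP0 HS0).
  assert (Hhigh := RInt_le_left_value p P S Hcont Hdecr HP0 HS0).
  assert (Hwel := proj2 Hsocial xP (proj1 Hmono)).
  assert (Hprof := proj2 Hmono xS (proj1 Hsocial)).
  rewrite !profit_eq in Hprof. fold P S in Hprof.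
  assert (Hgap := welfare_gap).
  assert (Heq : welfare N p C xS = welfare N p C xP) by (rewrite Hprice in Hhigh; nra).
  unfold efficiency. rewrite Heq. field. lra.
Qed.

Section Slope.
Variable r : R.
Hypothesis Hsupp : supporting p P r.
Hypothesis Hr0 : r <= 0.

(* Since p lies above its tangent line at P, the monopoly welfare is at least
   3/2 (-r) P^2. *)
Lemma monopoly_welfare_lower : 3 / 2 * (- r) * P ^ 2 <= welfare N p C xP.
Proof.
  rewrite welfare_eq by (apply Hcont || apply Hmono). fold P.
  assert (Hint := RInt_ge_affine p 0 P (p P) r P Hcont ltac:(lra)
                    (fun x Hx => Hsupp x ltac:(lra))).
  assert (Hcost := monopoly_cost_bound N p C xP HC Hmono r Hsupp).
  fold P in Hcost. nra.
Qed.

Lemma social_exceeds_monopoly : p P <> p S -> P < S.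
Proof.
  intros Hne.
  assert (Hfoc := monopoly_foc N p C xP HC Hmono r xS (proj1 Hsocial) Hsupp).
  assert (Hsoc := social_foc N p C xS HC Hcont Hdecr Hsocial xP (proj1 Hmono)).
  fold P S in Hfoc, Hsoc.
  destruct (Rtotal_order P S) as [Hlt|[Heq|Hgt]]; [exact Hlt| |]; exfalso; apply Hne.
  - rewrite Heq. reflexivity.
  - assert (Hprice : p P <= p S) by (apply Hdecr; lra).
    assert (Hpr : p S <= p P + r * P) by nra.
    nra.
Qed.

(* Above P, p lies below its chord, which bounds the welfare the monopoly forgoes. *)
Lemma welfare_gap_upper : P < S ->
  welfare N p C xS - welfare N p C xP <= - r * P * (S - P) + slope p P S * (S - P) ^ 2 / 2.
Proof.
  intros HPS. rewrite welfare_gap.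
  assert (Hint := RInt_le_affine p P S (p P) (slope p P S) P Hcont ltac:(lra)
                    (fun x Hx => chord_above p P S x Hconv HP0 HPS ltac:(lra))).
  assert (Hfoc := monopoly_foc N p C xP HC Hmono r xS (proj1 Hsocial) Hsupp).
  fold P S in Hfoc. nra.
Qed.

End Slope.

Lemma efficiency_unequal_prices : 0 < P -> 0 < welfare N p C xS ->
  (forall q, 0 < q -> (exists l, left_deriv p q l) /\ (exists l, right_deriv p q l)) ->
  p P <> p S ->
  exists c', derivable_pt_lim p P c' /\ 1 <= cbar p S P c' /\
             3 / (3 + cbar p S P c') <= efficiency N p C xS xP.
Proof.
  intros HP HWS Hders Hne.
  destruct (Hders P HP) as [[l Hl] [r Hr]].
  assert (Hlr := monopoly_no_kink N p C xP HC Hmono l r Hconv HP Hl Hr). subst l.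
  assert (Hsupp := supporting_right_deriv p P r Hconv HP0 Hr).
  assert (Hr0 := right_deriv_nonpos p P r Hdecr HP0 Hr).
  assert (HPS := social_exceeds_monopoly r Hsupp Hr0 Hne).
  assert (Hchord := slope_mul p P S ltac:(lra)).
  set (d := - slope p P S) in *.
  assert (Hd : 0 < d).
  { assert (p S <= p P) by (apply Hdecr; lra). assert (p S <> p P) by congruence. unfold d. nra. }
  assert (Hdc : d <= - r) by (assert (H := Hsupp S HS0); unfold d; nra).
  assert (Hcbar : cbar p S P r = - r / d).
  { unfold cbar. fold (slope p P S). rewrite (Rabs_left1 r Hr0), (Rabs_left (slope p P S))
      by (unfold d in Hd; lra).
    reflexivity. }
  exists r. split; [apply one_sided_derivable; assumption|]. rewrite Hcbar. split.
  - apply Rcomplements.Rle_div_r; lra.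
  - apply (efficiency_algebra P (S - P)); [lra|exact HWS|apply monopoly_welfare_lower; assumption|].
    assert (H := welfare_gap_upper r Hsupp HPS). unfold d. lra.
Qed.

End Efficiency.

(* The tight example: one supplier with zero cost facing p(q) = max(0, 1 - q);
   the social optimum is 1, the monopoly output 1/2, and cbar = 1. *)

Definition p_example (q : R) : R := Rmax 0 (1 - q).
Definition C_example (n : nat) (x : R) : R := 0.

Lemma p_example_lin x : x <= 1 -> p_example x = 1 - x.
Proof. intros; unfold p_example; apply Rmax_right; lra. Qed.

Lemma p_example_zero x : 1 <= x -> p_example x = 0.
Proof. intros; unfold p_example; apply Rmax_left; lra. Qed.

Lemma p_example_cases x :
  (x <= 1 /\ p_example x = 1 - x) \/ (1 <= x /\ p_example x = 0).
Proof.
  destruct (Rle_lt_dec x 1); [left|right]; split; try lra.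
  - apply p_example_lin; assumption.
  - apply p_example_zero; lra.
Qed.

Lemma p_example_cont : cont_nonneg p_example.
Proof.
  intros x _ eps Heps. exists eps; split; [exact Heps|]. intros y _ Hy.
  apply Rabs_def2 in Hy. apply Rabs_def1;
    destruct (p_example_cases x) as [[? ->]|[? ->]];
    destruct (p_example_cases y) as [[? ->]|[? ->]]; lra.
Qed.

Lemma p_example_nonincr : nonincr_nonneg p_example.
Proof.
  intros x y _ Hxy.
  destruct (p_example_cases x) as [[? ->]|[? ->]];
    destruct (p_example_cases y) as [[? ->]|[? ->]]; lra.
Qed.

Lemma p_example_convex : convex_nonneg p_example.
Proof.
  intros x y t _ _ Ht. unfold p_example. apply Rmax_lub.
  - apply Rplus_le_le_0_compat; apply Rmult_le_pos; try apply Rmax_l; lra.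
  - assert (t * (1 - x) <= t * Rmax 0 (1 - x))
      by (apply Rmult_le_compat_l; [lra|apply Rmax_r]).
    assert ((1 - t) * (1 - y) <= (1 - t) * Rmax 0 (1 - y))
      by (apply Rmult_le_compat_l; [lra|apply Rmax_r]).
    lra.
Qed.

Lemma p_example_right_deriv q : exists l, right_deriv p_example q l.
Proof.
  destruct (Rlt_le_dec q 1).
  - exists (-1). intros eps Heps. exists (1 - q); split; [lra|]. intros h Hh.
    rewrite !p_example_lin by lra.
    replace ((1 - (q + h) - (1 - q)) / h - -1) with 0 by (field; lra).
    rewrite Rabs_R0; exact Heps.
  - exists 0. intros eps Heps. exists 1; split; [lra|]. intros h Hh.
    rewrite !p_example_zero by lra.
    replace ((0 - 0) / h - 0) with 0 by (field; lra).
    rewrite Rabs_R0; exact Heps.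
Qed.

Lemma p_example_left_deriv q : exists l, left_deriv p_example q l.
Proof.
  destruct (Rle_lt_dec q 1).
  - exists (-1). intros eps Heps. exists 1; split; [lra|]. intros h Hh.
    rewrite !p_example_lin by lra.
    replace ((1 - (q + h) - (1 - q)) / h - -1) with 0 by (field; lra).
    rewrite Rabs_R0; exact Heps.
  - exists 0. intros eps Heps. exists (q - 1); split; [lra|]. intros h Hh.
    rewrite !p_example_zero by lra.
    replace ((0 - 0) / h - 0) with 0 by (field; lra).
    rewrite Rabs_R0; exact Heps.
Qed.

Lemma example_model : model 1 p_example C_example (fun _ => 0).
Proof.
  split; [|split; [|split; [|split; [|split]]]].
  - intros n _. unfold C_example. repeat split.
    + intros; lra.
    + intros x y t _ _ _; lra.
    + intros x _ eps Heps. exists 1; split; [lra|]. intros.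
      rewrite Rminus_diag, Rabs_R0; exact Heps.
    + intros x y _ _; lra.
    + exists (fun _ => 0). split; intros x _.
      * apply (derivable_pt_lim_const 0 x).
      * apply continuity_pt_const. intros u v; reflexivity.
  - intros n _ eps Heps. exists 1; split; [lra|]. intros h Hh. unfold C_example.
    replace ((0 - 0) / h - 0) with 0 by (field; lra). rewrite Rabs_R0; exact Heps.
  - split; [apply p_example_cont|]. split; [intros q _; apply Rmax_l|].
    split; [apply p_example_nonincr|]. split; [rewrite p_example_lin; lra|].
    split; [apply p_example_right_deriv|].
    intros q _. split; [apply p_example_left_deriv|apply p_example_right_deriv].
  - exists 1. split; [lra|]. intros n _. rewrite p_example_zero; lra.
  - exists 0%nat. split; [lia|]. rewrite p_example_lin; lra.
  - apply p_example_convex.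
Qed.

Lemma example_total x : total 1 x = x 0%nat.
Proof. unfold total; simpl; ring. Qed.

Lemma example_cost x : cost 1 C_example x = 0.
Proof. unfold cost, C_example; simpl; ring. Qed.

Lemma example_RInt a : 0 <= a <= 1 -> RInt p_example 0 a = a - a ^ 2 / 2.
Proof.
  intros Ha.
  rewrite (RInt_ext p_example (affine 1 (-1) 0)).
  - rewrite RInt_affine. lra.
  - intros x Hx. rewrite Rmin_left, Rmax_right in Hx by lra.
    unfold affine. rewrite p_example_lin; lra.
Qed.

Lemma example_welfare x : feasible 1 x -> welfare 1 p_example C_example x = RInt p_example 0 (x 0%nat).
Proof.
  intros Hx. rewrite welfare_eq by (apply p_example_cont || exact Hx).
  rewrite example_cost, example_total. ring.
Qed.

Lemma tight_example : exists (N : nat) (p : R -> R) (C : nat -> R -> R) (dC0 : nat -> R)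
    (xS xP : nat -> R),
  model N p C dC0 /\ social_optimum N p C xS /\ monopoly_output N p C xP /\
  p (total N xP) <> p (total N xS) /\
  (exists c', derivable_pt_lim p (total N xP) c' /\ cbar p (total N xS) (total N xP) c' = 1) /\
  efficiency N p C xS xP = 3 / 4.
Proof.
  exists 1%nat, p_example, C_example, (fun _ => 0), (fun _ => 1), (fun _ => 1 / 2).
  assert (HS : feasible 1 (fun _ => 1)) by (intros n _; lra).
  assert (HP : feasible 1 (fun _ => 1 / 2)) by (intros n _; lra).
  rewrite !example_total.
  split; [apply example_model|]. split; [|split; [|split; [|split]]].
  - (* p vanishes beyond 1, so no total output beats 1 *)
    split; [exact HS|]. intros y Hy. rewrite !example_welfare by assumption.
    assert (Hy0 := Hy 0%nat ltac:(lia)).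
    assert (Hsplit := RInt_split p_example 1 (y 0%nat) p_example_cont ltac:(lra) Hy0).
    assert (Htail := RInt_le_left_value p_example 1 (y 0%nat)
                       p_example_cont p_example_nonincr ltac:(lra) Hy0).
    rewrite p_example_zero in Htail by lra. lra.
  - (* the profit y (1 - y) is maximal at y = 1/2 *)
    split; [exact HP|]. intros y Hy. rewrite !profit_eq, !example_cost, !example_total.
    rewrite (p_example_lin (1 / 2)) by lra.
    assert (Hy0 := Hy 0%nat ltac:(lia)).
    assert (0 <= (y 0%nat - 1 / 2) ^ 2) by apply pow2_ge_0.
    destruct (p_example_cases (y 0%nat)) as [[? ->]|[? ->]]; nra.
  - rewrite p_example_lin, p_example_zero by lra. lra.
  - exists (-1). split.
    + intros eps Heps. exists (mkposreal (1 / 2) ltac:(lra)). intros h Hh0 Hh. simpl in Hh.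
      apply Rabs_def2 in Hh. rewrite !p_example_lin by lra.
      replace ((1 - (1 / 2 + h) - (1 - 1 / 2)) / h - -1) with 0 by (field; exact Hh0).
      rewrite Rabs_R0; exact Heps.
    + unfold cbar. rewrite (p_example_lin (1 / 2)), (p_example_zero 1) by lra.
      replace ((0 - (1 - 1 / 2)) / (1 - 1 / 2)) with (-1) by field.
      rewrite Rabs_left by lra. field.
  - unfold efficiency. rewrite !example_welfare by assumption.
    rewrite !example_RInt by lra. field.
Qed.

Theorem theorem3 :
  (forall (N : nat) (p : R -> R) (C : nat -> R -> R) (dC0 : nat -> R)
          (xS xP : nat -> R),
     model N p C dC0 ->
     social_optimum N p C xS ->
     monopoly_output N p C xP ->
     (* (a) *)
     (p (total N xP) = p (total N xS) -> efficiency N p C xS xP = 1) /\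
     (* (b) *)
     (p (total N xP) <> p (total N xS) ->
        exists c', derivable_pt_lim p (total N xP) c' /\
          1 <= cbar p (total N xS) (total N xP) c' /\
          3 / (3 + cbar p (total N xS) (total N xP) c') <= efficiency N p C xS xP))
  /\
  (* (c) tightness at cbar = 1 *)
  (exists (N : nat) (p : R -> R) (C : nat -> R -> R) (dC0 : nat -> R)
          (xS xP : nat -> R),
     model N p C dC0 /\ social_optimum N p C xS /\ monopoly_output N p C xP /\
     p (total N xP) <> p (total N xS) /\
     (exists c', derivable_pt_lim p (total N xP) c' /\
                 cbar p (total N xS) (total N xP) c' = 1) /\
     efficiency N p C xS xP = 3 / 4).
Proof.
  split; [|exact tight_example].
  intros N p C dC0 xS xP Hmodel Hsocial Hmono.
  assert (HWS := social_welfare_pos N p C dC0 xS Hmodel Hsocial).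
  assert (HP := monopoly_total_pos N p C dC0 xP Hmodel Hmono).
  destruct Hmodel as [HC [_ [[Hcont [_ [Hdecr [_ [_ Hders]]]]] [_ [_ Hconv]]]]].
  split.
  - exact (efficiency_equal_prices N p C xS xP Hcont Hdecr Hsocial Hmono HWS).
  - exact (efficiency_unequal_prices N p C xS xP HC Hcont Hdecr Hconv Hsocial Hmono HP HWS Hders).
Qed.
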